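(* Let $\gamma$ be a gauge on $\mathbb{R}^d$ with skewness $\sigma$, and let $v\in\mathbb{R}^d$ with $\gamma(v)=1$. Then $v\in \mathrm{SD}_\gamma$ if and only if $-\frac{1}{\sigma}\,\partial\gamma(v)\subseteq\partial\gamma(-v)$.
   Context: A gauge $\gamma$ on $\mathbb{R}^d$ is the Minkowski functional of a convex compact set $B_\gamma=\{x:\gamma(x)\le 1\}$ having the origin in its interior; it is positive except at $0$, positively homogeneous, and subadditive, but not necessarily symmetric. The dual gauge is $\gamma^\circ(p)=\max\{\langle p,x\rangle:\gamma(x)=1\}$, with unit ball $B_{\gamma^\circ}$ and boundary $\partial B_{\gamma^\circ}=\{p:\gamma^\circ(p)=1\}$. For $x\neq 0$, the subdifferential is $\partial\gamma(x)=\{p\in\partial B_{\gamma^\circ}:\langle p,x\rangle=\gamma(x)\}$ (and $\partial\gamma(0)=B_{\gamma^\circ}$). The skewness of $\gamma$ is $\sigma=\sup_{x\neq 0}\gamma(x)/\gamma(-x)$ (so $\sigma\ge 1$, with equality iff $\gamma$ is a norm). The set of skewness directions is $\mathrm{SD}_\gamma=\{v\in\mathbb{R}^d:\gamma(v)=\sigma\,\gamma(-v)=1\}$. *)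

From HB Require Import structures.
From mathcomp Require Import all_boot all_order all_algebra.
From mathcomp Require Import all_classical all_reals all_analysis.
Set Implicit Arguments. Unset Strict Implicit. Unset Printing Implicit Defensive.
Import Order.TTheory GRing.Theory Num.Theory.
Import numFieldNormedType.Exports.
Local Open Scope classical_set_scope.
Local Open Scope ring_scope.

Section Gauge.
Variables (R : realType) (d : nat).
Local Notation V := 'rV[R]_d.

Definition dotp (p x : V) : R := \sum_(i < d) p ord0 i * x ord0 i.

Definition convex_setR (B : set V) : Prop :=
  forall x y (t : R), 0 <= t -> t <= 1 -> B x -> B y -> B (t *: x + (1 - t) *: y).

Definition minkowski (B : set V) (x : V) : R :=
  inf [set t : R | 0 < t /\ B (t^-1 *: x)].

Definition is_gauge (gamma : V -> R) : Prop :=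
  exists B : set V, [/\ convex_setR B, compact B, B^° 0
                      & forall x, gamma x = minkowski B x].

(* dual gauge: gamma°(p) = max { <p,x> : gamma(x) = 1 } (max written as sup;
   the maximum is attained by compactness) *)
Definition dual_gauge (gamma : V -> R) (p : V) : R :=
  sup [set dotp p x | x in [set x | gamma x = 1]].

Definition subdiff (gamma : V -> R) (x : V) : set V :=
  if x == 0 then [set p | dual_gauge gamma p <= 1]
  else [set p | dual_gauge gamma p = 1 /\ dotp p x = gamma x].

Definition skewness (gamma : V -> R) : R :=
  sup [set gamma x / gamma (- x) | x in [set x : V | x != 0]].

Definition SD (gamma : V -> R) : set V :=
  [set v | gamma v = 1 /\ skewness gamma * gamma (- v) = 1].

End Gauge.

From Pilot Require Import Defs.
From HB Require Import structures.
From mathcomp Require Import all_boot all_order all_algebra.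
From mathcomp Require Import all_classical all_reals all_analysis.
From mathcomp Require Import lra ring.
Set Implicit Arguments. Unset Strict Implicit. Unset Printing Implicit Defensive.
Import Order.TTheory GRing.Theory Num.Theory.
Import numFieldNormedType.Exports.
Local Open Scope classical_set_scope.
Local Open Scope ring_scope.

(* Write [s] for the skewness of the gauge [gamma].
   A gauge is a positive sublinear functional, and for such a functional the
   subdifferential at x <> 0 is the set of linear forms p with p <= gamma
   everywhere and <p, x> = gamma x (lemma [subdiffE]).
   (->) If s * gamma(-v) = 1 and p is in the subdifferential at v, then
   q := -p/s satisfies q(y) = p(-y)/s <= gamma(-y)/s <= gamma(y), by the
   definition of s, and <q, -v> = 1/s = gamma(-v).
   (<-) Pick some p in the subdifferential at v; then -p/s is in the
   subdifferential at -v, so gamma(-v) = <-p/s, -v> = 1/s.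
   The only non-trivial ingredient is that the subdifferential at v is
   non-empty, a finite-dimensional Hahn-Banach theorem ([subgradient_exists]).
   It is obtained by repeatedly replacing a sublinear functional h by its
   directional derivative at some point u: this is again sublinear, below h,
   linear along u, and keeps linearity along previously treated directions.
   Doing this at v and then along the d basis vectors yields a linear
   functional below gamma which agrees with gamma at v. *)

Section Sublinear.
Variables (R : realType) (V : lmodType R).

Definition sublinear (h : V -> R) : Prop := [/\ h 0 = 0,
  forall c x, 0 < c -> h (c *: x) = c * h x &
  forall x y, h (x + y) <= h x + h y].

Definition diff_quot (h : V -> R) (u y : V) (t : R) : R :=
  (h (u + t *: y) - h u) / t.
Definition dir_deriv (h : V -> R) (u y : V) : R :=
  inf [set diff_quot h u y t | t in [set t : R | 0 < t]].

Definition linear_along (h : V -> R) (w : V) : Prop := h w + h (- w) = 0.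

Variable h : V -> R.
Hypothesis h_sublin : sublinear h.

Lemma sublinear_homo c x : 0 <= c -> h (c *: x) = c * h x.
Proof.
case: h_sublin => h0 hZ _; rewrite le_eqVlt => /orP [/eqP <-|]; last exact: hZ.
by rewrite scale0r mul0r h0.
Qed.

Lemma diff_quot_lb u y t : 0 < t -> - h (- y) <= diff_quot h u y t.
Proof.
case: h_sublin => _ hZ hD t0; rewrite /diff_quot ler_pdivlMr //.
have := hD (u + t *: y) (t *: - y); rewrite hZ // scalerN addrK; lra.
Qed.

Lemma dir_deriv_le u y t : 0 < t -> dir_deriv h u y <= diff_quot h u y t.
Proof.
move=> t0; apply: ge_inf; last by exists t.
by exists (- h (- y)) => _ [s s0 <-]; exact: diff_quot_lb.
Qed.

Lemma dir_deriv_ge u y c :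
  (forall t, 0 < t -> c <= diff_quot h u y t) -> c <= dir_deriv h u y.
Proof.
move=> Hc; apply: lb_le_inf; first by exists (diff_quot h u y 1), 1 => //=.
by move=> _ [s s0 <-]; exact: Hc.
Qed.

Lemma dir_deriv_le_fun u y : dir_deriv h u y <= h y.
Proof.
case: h_sublin => _ _ hD; apply: (le_trans (dir_deriv_le u y ltr01)).
rewrite /diff_quot divr1 scale1r; have := hD u y; lra.
Qed.

(* by convexity, difference quotients are nondecreasing in t *)
Lemma diff_quot_mono u y s t : 0 < s -> s <= t ->
  diff_quot h u y s <= diff_quot h u y t.
Proof.
case: h_sublin => _ hZ hD s0 st; have t0 : 0 < t := lt_le_trans s0 st.
have convex_comb : u + s *: y = (s / t) *: (u + t *: y) + (1 - s / t) *: u.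
  rewrite scalerDr scalerA scalerBl scale1r.
  have -> : s / t * t = s by field; rewrite gt_eqF.
  by rewrite [RHS]addrC addrA subrK.
have := hD ((s / t) *: (u + t *: y)) ((1 - s / t) *: u).
rewrite -convex_comb hZ ?divr_gt0 // sublinear_homo; last first.
  by rewrite subr_ge0 ler_pdivrMr // mul1r.
rewrite mulrBl mul1r => H.
rewrite /diff_quot ler_pdivrMr //.
have -> : (h (u + t *: y) - h u) / t * s = s / t * h (u + t *: y) - s / t * h u.
  by ring.
lra.
Qed.

Lemma diff_quot_scale u y c t : 0 < c -> 0 < t ->
  diff_quot h u (c *: y) t = c * diff_quot h u y (c * t).
Proof.
move=> c0 t0; rewrite /diff_quot scalerA (mulrC t c).
by field; apply/andP; split; rewrite gt_eqF.
Qed.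

Lemma dir_deriv0 u : dir_deriv h u 0 = 0.
Proof.
have q0 t : diff_quot h u 0 t = 0 by rewrite /diff_quot scaler0 addr0 subrr mul0r.
apply/le_anti/andP; split; first by have := dir_deriv_le u 0 ltr01; rewrite q0.
by apply: dir_deriv_ge => t _; rewrite q0.
Qed.

Lemma dir_deriv_homo u c y : 0 < c -> dir_deriv h u (c *: y) = c * dir_deriv h u y.
Proof.
move=> c0; apply/le_anti/andP; split.
  rewrite -ler_pdivrMl //; apply: dir_deriv_ge => t t0; rewrite ler_pdivrMl //.
  have := dir_deriv_le u (c *: y) (divr_gt0 t0 c0).
  rewrite diff_quot_scale ?divr_gt0 //.
  by have -> : c * (t / c) = t by field; rewrite gt_eqF.
apply: dir_deriv_ge => t t0; rewrite diff_quot_scale // ler_pM2l //.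
by apply: dir_deriv_le; rewrite mulr_gt0.
Qed.

Lemma dir_deriv_subadd u y z :
  dir_deriv h u (y + z) <= dir_deriv h u y + dir_deriv h u z.
Proof.
case: h_sublin => _ hZ hD.
suff : dir_deriv h u (y + z) - dir_deriv h u z <= dir_deriv h u y by lra.
apply: dir_deriv_ge => s1 s10.
suff : dir_deriv h u (y + z) - diff_quot h u y s1 <= dir_deriv h u z by lra.
apply: dir_deriv_ge => s2 s20.
suff : dir_deriv h u (y + z) <= diff_quot h u y s1 + diff_quot h u z s2 by lra.
set m := Num.min s1 s2.
have m0 : 0 < m by rewrite lt_min s10 s20.
have m2_0 : 0 < m / 2 by rewrite divr_gt0.
apply: le_trans (dir_deriv_le u (y + z) m2_0) _.
have m1 : m <= s1 by rewrite ge_min lexx.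
have m2 : m <= s2 by rewrite ge_min lexx orbT.
apply: le_trans (lerD (diff_quot_mono u y m0 m1) (diff_quot_mono u z m0 m2)).
have midpoint : u + (m / 2) *: (y + z) =
    2^-1 *: (u + m *: y) + 2^-1 *: (u + m *: z).
  rewrite !scalerDr !scalerA addrACA -scalerDl.
  congr (_ + _); last by rewrite (mulrC m).
  have -> : (2^-1 + 2^-1 : R) = 1 by field.
  by rewrite scale1r.
have := hD (2^-1 *: (u + m *: y)) (2^-1 *: (u + m *: z)).
rewrite -midpoint !hZ ?invr_gt0 // /diff_quot => H.
have -> : (h (u + (m / 2) *: (y + z)) - h u) / (m / 2) =
    (2 * (h (u + (m / 2) *: (y + z)) - h u)) / m by field; rewrite gt_eqF.
rewrite -mulrDl ler_pM2r ?invr_gt0 //; lra.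
Qed.

Lemma dir_deriv_sublinear u : sublinear (dir_deriv h u).
Proof. by split; [exact: dir_deriv0 | exact: dir_deriv_homo | exact: dir_deriv_subadd]. Qed.

Lemma linear_along_below (k : V -> R) w : sublinear k -> (forall y, k y <= h y) ->
  linear_along h w -> linear_along k w.
Proof.
case=> k0 _ kD k_le hw; apply/le_anti/andP; split.
  by have := k_le w; have := k_le (- w); rewrite /linear_along in hw; lra.
by have := kD w (- w); rewrite subrr k0.
Qed.

Lemma dir_deriv_linear_along u w :
  linear_along h w -> linear_along (dir_deriv h u) w.
Proof.
by apply: linear_along_below; [exact: dir_deriv_sublinear | exact: dir_deriv_le_fun].
Qed.

(* h'(u; -u) <= -h(u); together with h'(u; u) <= h(u) this makes the
   directional derivative at u linear along u *)
Lemma dir_deriv_opp_self u : dir_deriv h u (- u) <= - h u.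
Proof.
case: h_sublin => _ hZ _; have h2 : (0 : R) < 2^-1 by rewrite invr_gt0.
apply: le_trans (dir_deriv_le u (- u) h2) _; rewrite /diff_quot scalerN.
have -> : u - 2^-1 *: u = 2^-1 *: u.
  by rewrite -{1}(scale1r u) -scalerBl; congr (_ *: _); field.
by rewrite hZ //; have -> : (2^-1 * h u - h u) / 2^-1 = - h u by field.
Qed.

Lemma dir_deriv_linear_self u : linear_along (dir_deriv h u) u.
Proof.
case: (dir_deriv_sublinear u) => D0 _ DD; apply/le_anti/andP; split.
  by have := dir_deriv_le_fun u u; have := dir_deriv_opp_self u; lra.
by have := DD u (- u); rewrite subrr D0.
Qed.

Lemma sublinear_sum (I : Type) (r : seq I) (F : I -> V) :
  h (\sum_(i <- r) F i) <= \sum_(i <- r) h (F i).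
Proof.
case: h_sublin => h0 _ hD; apply: (big_ind2 (fun x y => h x <= y)) => //.
- by rewrite h0.
- by move=> x1 x2 y1 y2 H1 H2; apply: le_trans (hD _ _) (lerD H1 H2).
Qed.

Lemma linear_along_scale w c : linear_along h w -> h (c *: w) = c * h w.
Proof.
move=> hw; have [c0|c0] := leP 0 c; first exact: sublinear_homo.
have -> : c *: w = (- c) *: (- w) by rewrite scaleNr scalerN opprK.
rewrite sublinear_homo; last by rewrite oppr_ge0 ltW.
have -> : h (- w) = - h w by rewrite /linear_along in hw; lra.
by rewrite mulrNN.
Qed.

End Sublinear.

Section HahnBanach.
Variables (R : realType) (d : nat).
Local Notation V := 'rV[R]_d.

Lemma dotpZr (p y : V) c : dotp p (c *: y) = c * dotp p y.
Proof. by rewrite /dotp mulr_sumr; apply: eq_bigr => i _; rewrite !mxE mulrCA. Qed.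

Lemma dotpZl (p y : V) c : dotp (c *: p) y = c * dotp p y.
Proof. by rewrite /dotp mulr_sumr; apply: eq_bigr => i _; rewrite !mxE mulrA. Qed.

Lemma dotp0r (p : V) : dotp p 0 = 0.
Proof. by rewrite -(scale0r (0 : V)) dotpZr mul0r. Qed.

Lemma dotpNr (p y : V) : dotp p (- y) = - dotp p y.
Proof. by rewrite -scaleN1r dotpZr mulN1r. Qed.

Lemma sublinear_dotp (h : V -> R) : sublinear h ->
  (forall i, linear_along h (delta_mx 0 i)) ->
  forall x, h x = dotp (\row_i h (delta_mx 0 i)) x.
Proof.
move=> h_sublin h_lin x; set p := \row_i h (delta_mx 0 i).
have coord_sum (y : V) : \sum_i h (y 0 i *: delta_mx 0 i) = dotp p y.
  by rewrite /dotp; apply: eq_bigr => i _; rewrite linear_along_scale // mxE mulrC.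
have le_x := sublinear_sum h_sublin (index_enum _) (fun i => x 0 i *: delta_mx 0 i).
have le_nx := sublinear_sum h_sublin (index_enum _) (fun i => (- x) 0 i *: delta_mx 0 i).
rewrite -row_sum_delta coord_sum in le_x.
rewrite -row_sum_delta coord_sum dotpNr in le_nx.
case: h_sublin => h0 _ hD; have := hD x (- x); rewrite subrr h0; lra.
Qed.

Definition iter_dir_deriv (h : V -> R) (s : seq V) : V -> R :=
  foldr (fun u k => dir_deriv k u) h s.

Lemma iter_dir_deriv_spec (h : V -> R) (s : seq V) : sublinear h ->
  [/\ sublinear (iter_dir_deriv h s), (forall y, iter_dir_deriv h s y <= h y)
    & forall w, w \in s -> linear_along (iter_dir_deriv h s) w].
Proof.
move=> h_sublin; elim: s => [|u s [IHsub IHle IHlin]] //=.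
split; first exact: dir_deriv_sublinear.
  by move=> y; apply: le_trans (IHle y); apply: dir_deriv_le_fun.
move=> w; rewrite in_cons => /orP [/eqP ->|ws]; first exact: dir_deriv_linear_self.
exact/dir_deriv_linear_along/IHlin.
Qed.

Lemma subgradient_exists (G : V -> R) (v : V) : sublinear G ->
  exists p, (forall y, dotp p y <= G y) /\ dotp p v = G v.
Proof.
move=> G_sublin; set basis := [seq (delta_mx 0 i : V) | i <- enum 'I_d].
have [k_sublin k_le k_lin] :=
  iter_dir_deriv_spec basis (dir_deriv_sublinear G_sublin v).
set k := iter_dir_deriv _ basis in k_sublin k_le k_lin.
have kE := sublinear_dotp k_sublin (fun i => k_lin _ (map_f _ (mem_enum _ i))).
have k_le_G y : k y <= G y := le_trans (k_le y) (dir_deriv_le_fun G_sublin v y).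
exists (\row_i k (delta_mx 0 i)); split=> [y|]; rewrite -kE //.
apply/le_anti; rewrite k_le_G /=.
have := dir_deriv_opp_self G_sublin v; have := k_le (- v).
case: k_sublin => k0 _ kD; have := kD v (- v); rewrite subrr k0; lra.
Qed.

End HahnBanach.

Section Minkowski.
Variables (R : realType) (d : nat).
Local Notation V := 'rV[R]_d.
Variable B : set V.
Hypotheses (B_convex : convex_setR B) (B_compact : compact B) (B_int0 : B° 0).

Let admissible (x : V) : set R := [set t : R | 0 < t /\ B (t^-1 *: x)].
Local Notation g := (Defs.minkowski B).

Lemma ball_sub_B : exists2 r : R, 0 < r & forall x : V, `|x| < r -> B x.
Proof.
have /nbhs_ballP [r r0 rB] : nbhs (0 : V) B by [].
by exists r => // x xr; apply: rB; rewrite -ball_normE /= sub0r normrN.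
Qed.

Lemma B_bounded : exists2 M : R, 0 < M & forall x : V, B x -> `|x| <= M.
Proof.
have [M0 [_ HM]] := compact_bounded B_compact.
have M_gt : M0 < Num.max M0 0 + 1 by rewrite ltr_pwDr // le_max lexx.
exists (Num.max M0 0 + 1) => [|x Bx]; last exact: HM M_gt x Bx.
by rewrite ltr_pwDr // le_max lexx orbT.
Qed.

(* every x lies in some dilate of B, since B contains a ball around 0 *)
Lemma admissible_neq0 x : admissible x !=set0.
Proof.
have [r r0 rB] := ball_sub_B; have n0 := normr_ge0 x.
have t0 : 0 < (`|x| + 1) / r * 2 by rewrite mulr_gt0 // divr_gt0 //; lra.
exists ((`|x| + 1) / r * 2); split => //; apply: rB.
rewrite normrZ normfV (gtr0_norm t0) mulrC ltr_pdivrMr //.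
rewrite mulrA mulrCA divff ?gt_eqF // mulr1; lra.
Qed.

Lemma minkowski_le x t : admissible x t -> g x <= t.
Proof. by move=> xt; apply: ge_inf => //; exists 0 => s [/ltW]. Qed.

Lemma minkowski_ge x c : (forall t, admissible x t -> c <= t) -> c <= g x.
Proof. by move=> Hc; apply: lb_le_inf => //; apply: admissible_neq0. Qed.

Lemma minkowski_homo_le c x : 0 < c -> g (c *: x) <= c * g x.
Proof.
move=> c0; rewrite -ler_pdivrMl //; apply: minkowski_ge => t [t0 Bt].
rewrite ler_pdivrMl //; apply: minkowski_le; split; first by rewrite mulr_gt0.
by rewrite scalerA invfM mulrAC mulVf ?gt_eqF // mul1r.
Qed.

Lemma minkowski_homo c x : 0 < c -> g (c *: x) = c * g x.
Proof.
move=> c0; apply/le_anti; rewrite minkowski_homo_le //=.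
have := @minkowski_homo_le c^-1 (c *: x); rewrite invr_gt0 => /(_ c0).
by rewrite scalerA mulVf ?gt_eqF // scale1r ler_pdivlMl.
Qed.

(* subadditivity is where the convexity of B is used *)
Lemma minkowski_subadd x y : g (x + y) <= g x + g y.
Proof.
suff : g (x + y) - g y <= g x by lra.
apply: minkowski_ge => t [t0 Bt]; suff : g (x + y) - t <= g y by lra.
apply: minkowski_ge => s [s0 Bs]; suff : g (x + y) <= t + s by lra.
have st0 : 0 < t + s by rewrite addr_gt0.
apply: minkowski_le; split => //.
have -> : (t + s)^-1 *: (x + y) =
    (t / (t + s)) *: (t^-1 *: x) + (1 - t / (t + s)) *: (s^-1 *: y).
  rewrite !scalerA scalerDr; congr (_ *: _ + _ *: _);
    by field; apply/andP; split; rewrite gt_eqF.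
apply: B_convex => //; first by rewrite divr_ge0 ?ltW.
by rewrite ler_pdivrMr // mul1r lerDl ltW.
Qed.

Lemma minkowski_sublinear : sublinear g.
Proof.
split; [|exact: minkowski_homo|exact: minkowski_subadd].
by have := minkowski_homo (0 : V) (ltr0Sn _ 1); rewrite scaler0 => H; lra.
Qed.

(* positivity is where the boundedness of B is used *)
Lemma minkowski_pos x : x != 0 -> 0 < g x.
Proof.
move=> x0; have [M M0 HM] := B_bounded.
apply: (@lt_le_trans _ _ (`|x| / M)); first by rewrite divr_gt0 // normr_gt0.
apply: minkowski_ge => t [t0 /HM]; rewrite normrZ normfV gtr0_norm //.
by rewrite mulrC ler_pdivrMr // ler_pdivrMr // mulrC.
Qed.

End Minkowski.

Lemma gauge_sublinear_pos (R : realType) (d : nat) (gam : 'rV[R]_d -> R) :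
  is_gauge gam -> sublinear gam /\ forall x, x != 0 -> 0 < gam x.
Proof.
move=> [B [B_convex B_compact B_int0 gamE]].
have -> : gam = Defs.minkowski B by apply: funext.
split; [exact: minkowski_sublinear | exact: minkowski_pos].
Qed.

Section Subdifferential.
Variables (R : realType) (d : nat).
Local Notation V := 'rV[R]_d.
Variable gam : V -> R.
Hypotheses (gam_sublin : sublinear gam) (gam_pos : forall x, x != 0 -> 0 < gam x).

Lemma gauge_unit_normalize x : x != 0 -> gam ((gam x)^-1 *: x) = 1.
Proof.
case: gam_sublin => _ gZ _ x0; have gx := gam_pos x0.
by rewrite gZ ?invr_gt0 // mulVf ?gt_eqF.
Qed.

Lemma dual_gauge_ub p : dual_gauge gam p = 1 -> forall y, dotp p y <= gam y.
Proof.
move=> p1 y; set S := [set dotp p x | x in [set x | gam x = 1]].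
have S_sup : has_sup S.
  apply/not_notP => noS; move: p1; rewrite /dual_gauge -/S sup_out //.
  by move/eqP; rewrite eq_sym oner_eq0.
have [->|y0] := eqVneq y 0.
  by case: gam_sublin => g0 _ _; rewrite dotp0r g0.
have := ub_le_sup S_sup.2 (ex_intro2 _ _ _ (gauge_unit_normalize y0) erefl).
rewrite /dual_gauge -/S in p1; rewrite p1 dotpZr ler_pdivrMl ?mulr1 //.
exact: gam_pos.
Qed.

Lemma dual_gauge_eq1 p : (forall y, gam y = 1 -> dotp p y <= 1) ->
  (exists2 y, gam y = 1 & dotp p y = 1) -> dual_gauge gam p = 1.
Proof.
move=> p_ub [y gy py]; rewrite /dual_gauge.
set S := [set dotp p x | x in [set x | gam x = 1]].
have S_ub : ubound S 1 by move=> _ [x /= gx <-]; exact: p_ub.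
apply/le_anti; rewrite ge_sup //=; last by exists (dotp p y), y.
by rewrite -{1}py; apply: (ub_le_sup (ex_intro _ 1 S_ub)); exists y.
Qed.

Lemma subdiffE x : x != 0 ->
  subdiff gam x = [set p | (forall y, dotp p y <= gam y) /\ dotp p x = gam x].
Proof.
move=> x0; rewrite /subdiff (negbTE x0); apply/seteqP; split=> p /= [p1 px].
  by split=> //; exact: dual_gauge_ub.
split=> //; apply: dual_gauge_eq1 => [y <-|]; first exact: p1.
exists ((gam x)^-1 *: x); first exact: gauge_unit_normalize.
by rewrite dotpZr px mulVf ?gt_eqF ?gam_pos.
Qed.

(* gam x <= skewness * gam (-x); the positivity hypothesis guarantees that
   the ratios defining the skewness are bounded, the supremum of an unbounded
   set being 0 by convention *)
Lemma skewness_ub x : 0 < skewness gam -> gam x <= skewness gam * gam (- x).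
Proof.
move=> s0; have [->|x0] := eqVneq x 0.
  by case: gam_sublin => g0 _ _; rewrite oppr0 g0 mulr0.
set T := [set gam y / gam (- y) | y in [set y : V | y != 0]].
have T_sup : has_sup T.
  by apply/not_notP => noT; move: s0; rewrite /skewness -/T sup_out // ltxx.
have := ub_le_sup T_sup.2 (ex_intro2 _ _ x x0 erefl).
by rewrite ler_pdivrMr // gam_pos // oppr_eq0.
Qed.

End Subdifferential.

Theorem mainTheorem1 (R : realType) (d : nat) (gamma : 'rV[R]_d -> R)
  (v : 'rV[R]_d) :
  is_gauge gamma -> gamma v = 1 ->
  (SD gamma v <->
   (fun p => - (skewness gamma)^-1 *: p) @` subdiff gamma v `<=` subdiff gamma (- v)).
Proof.
move=> /gauge_sublinear_pos [g_sublin g_pos] gv.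
have v0 : v != 0.
  by apply: contraPneq gv => ->; case: g_sublin => -> _ _ /esym/eqP; rewrite oner_eq0.
have nv0 : - v != 0 by rewrite oppr_eq0.
have gnv := g_pos _ nv0.
rewrite /SD (subdiffE g_sublin g_pos v0) (subdiffE g_sublin g_pos nv0).
set s := skewness gamma; split.
- case=> _ svE; have s0 : 0 < s by rewrite -(pmulr_lgt0 _ gnv) svE.
  move=> _ [p [p_le pv] <-]; split.
  + move=> y; rewrite dotpZl mulNr -mulrN -dotpNr ler_pdivrMl //.
    by have := skewness_ub g_sublin g_pos (- y) s0; rewrite opprK; apply: le_trans.
  + by rewrite dotpZl dotpNr pv gv mulrNN -svE mulKf // gt_eqF.
- move=> incl; split=> //.
  have [p p_sub] := subgradient_exists v g_sublin.
  have [_] := incl _ (ex_intro2 _ _ p p_sub erefl).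
  rewrite dotpZl dotpNr p_sub.2 gv mulrNN mulr1 => svE.
  rewrite -svE mulfV //.
  by apply: contraTneq gnv => s0; rewrite -svE s0 invr0 ltxx.
Qed.
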